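(* Let $q$ be a prime power and $m$ a positive integer. For $i\in\{1,2\}$ let $V_i=\mathbb F_{q^m}^{k_i}$ and let $U_i\subseteq V_i$ be a cutting $[n_i,k_i]_{q^m/q}$ system which is $(k_i-1,\,n_i-m-1+t_i)_q$-evasive, where $t_1,t_2\ge 0$ are integers with $t_1+t_2<m+2$. Then $U_1\oplus U_2\subseteq V_1\oplus V_2$ is a cutting $[n_1+n_2,\,k_1+k_2]_{q^m/q}$ system.
   Context: An $[n,k]_{q^m/q}$ system is an $\mathbb F_q$-subspace $U$ of $\mathbb F_{q^m}^k$ with $\dim_{\mathbb F_q}(U)=n$ and $\langle U\rangle_{\mathbb F_{q^m}}=\mathbb F_{q^m}^k$. It is cutting if for every $\mathbb F_{q^m}$-hyperplane $H$ one has $\langle H\cap U\rangle_{\mathbb F_{q^m}}=H$. It is $(h,r)_q$-evasive if $\dim_{\mathbb F_q}(U\cap H)\le r$ for every $h$-dimensional $\mathbb F_{q^m}$-subspace $H$. *)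

From HB Require Import structures.
From mathcomp Require Import all_boot all_order all_algebra all_field.
Set Implicit Arguments. Unset Strict Implicit. Unset Printing Implicit Defensive.
Import GRing.Theory Num.Theory.
Local Open Scope ring_scope.

(* Setting: F = F_q a finite field, L = F_{q^m} a finite extension of F,
   m = \dim_F L.  The ambient space F_{q^m}^k is {ffun 'I_k -> L}, which
   carries two vector-space structures on the same carrier:
   - VF k := {ffun 'I_k -> L}   : F-vector space (F_q-subspaces),
   - VL k := {ffun 'I_k -> L^o} : L-vector space (F_{q^m}-subspaces). *)

Section Systems.
Variables (F : finFieldType) (L : fieldExtType F).

Definition VF (k : nat) := {ffun 'I_k -> L}.
Definition VL (k : nat) := {ffun 'I_k -> L^o}.

Definition toL k (v : VF k) : VL k := [ffun i => (v i : L^o)].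

Definition is_Lspan k (S : VF k -> Prop) (W : {vspace VL k}) :=
  (forall v, S v -> toL v \in W) /\
  (forall W' : {vspace VL k}, (forall v, S v -> toL v \in W') -> (W <= W')%VS).

Definition is_system k n (U : {vspace VF k}) :=
  \dim U = n /\ is_Lspan (fun v => v \in U) fullv.

Definition Lhyperplane k (H : {vspace VL k}) := (\dim H).+1 = k.

Definition cutting k (U : {vspace VF k}) :=
  forall H : {vspace VL k}, Lhyperplane H ->
    is_Lspan (fun v => v \in U /\ toL v \in H) H.

(* dim_{F_q}(U ∩ H) <= r : the F_q-subspace U ∩ H has dimension <= r,
   i.e. every F_q-subspace contained in U ∩ H has dimension <= r. *)
Definition Fdim_cap_le k (U : {vspace VF k}) (H : {vspace VL k}) (r : int) :=
  forall S : {vspace VF k}, (S <= U)%VS -> (forall v, v \in S -> toL v \in H) ->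
    ((\dim S)%:Z <= r)%R.

Definition evasive k (U : {vspace VF k}) (h : nat) (r : int) :=
  forall H : {vspace VL k}, \dim H = h -> Fdim_cap_le U H r.

Definition inl_vec k1 k2 (v : VF k1) : VF (k1 + k2) :=
  [ffun i => match split i with inl j => v j | inr _ => 0 end].
Definition inr_vec k1 k2 (v : VF k2) : VF (k1 + k2) :=
  [ffun i => match split i with inl _ => 0 | inr j => v j end].

Definition dsum k1 k2 (U1 : {vspace VF k1}) (U2 : {vspace VF k2})
  : {vspace VF (k1 + k2)} :=
  (linfun (@inl_vec k1 k2) @: U1 + linfun (@inr_vec k1 k2) @: U2)%VS.

End Systems.

From HB Require Import structures.
From mathcomp Require Import all_boot all_order all_algebra all_field zify.
Set Implicit Arguments. Unset Strict Implicit. Unset Printing Implicit Defensive.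
Import GRing.Theory.
Local Open Scope ring_scope.

(* A hyperplane H of V1 ⊕ V2 is the kernel of a linear form f, with
   restrictions f1, f2 to V1, V2.  As U_i is cutting (or, when f_i = 0, as U_i
   spans V_i), the vectors of U_i ∩ H span ker f_i.  If both f_i are nonzero,
   evasiveness of U_i applied to ker f_i gives dim_{F_q} f_i(U_i) >= m + 1 - t_i,
   so t1 + t2 < m + 2 forces f1(u1) = f2(u2) <> 0 for some u_i in U_i.  Then
   u1 - u2 lies in (U1 ⊕ U2) ∩ H, and together with ker f1 ⊕ ker f2 it spans H. *)

Section LinearForms.
Variables (K : fieldType) (V : vectType K).

Lemma dim_regular : \dim {:K^o} = 1%N.
Proof. by rewrite dimvf /dim. Qed.

Lemma hyperplane_lker (H : {vspace V}) :
  (\dim H).+1 = \dim {:V} -> exists g : 'Hom(V, K^o), lker g = H.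
Proof.
move=> dimH; set e := vpick (H^C)%VS.
have dimHC : \dim (H^C)%VS = 1%N by rewrite dimv_compl -dimH subSnn.
have HCe : (H^C)%VS = <[e]>%VS.
  apply/eqP; rewrite eq_sym eqEdim dimHC dim_vline -memvE memv_pick.
  by rewrite vpick0 -dimv_eq0 dimHC.
exists (linfun (coord [tuple e] 0 : V -> K^o) \o (\1 - projv H))%VF.
apply/vspaceP => x; rewrite memv_ker comp_lfunE lfunE /= add_lfunE opp_lfunE id_lfunE.
have xHC : x - projv H x \in <<[tuple e]>>%VS by rewrite span_seq1 -HCe memv_projC.
apply/eqP/idP => [coord0 | xH]; last by rewrite projv_id // subrr linear0.
by rewrite -[x](subrK (projv H x)) (coord_span xHC) big_ord1 coord0 scale0r add0r memv_proj.
Qed.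

Lemma lker_hyperplane (g : 'Hom(V, K^o)) :
  lker g != fullv -> (\dim (lker g)).+1 = \dim {:V}.
Proof.
move=> g_neq0; have := limg_ker_dim g fullv; rewrite capfv.
have : (\dim (limg g) <= 1)%N by rewrite -dim_regular dimvS ?subvf.
suff : \dim (limg g) != 0%N by lia.
rewrite dimv_eq0; apply: contra g_neq0 => /eqP g0.
rewrite eqEsubv subvf; apply/subvP => x _.
by rewrite memv_ker -memv0 -g0 memv_img ?memvf.
Qed.

Lemma capv_neq0 (U W : {vspace V}) :
  (\dim {:V} < \dim U + \dim W)%N -> (U :&: W != 0)%VS.
Proof.
rewrite -dimv_eq0 => dimUW.
by have := dimv_sum_cap U W; have := dimvS (subvf (U + W)); lia.
Qed.

End LinearForms.

Section KernelOfSum.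
Variables (K : fieldType) (V1 V2 V : vectType K).
Variables (j1 : 'Hom(V1, V)) (j2 : 'Hom(V2, V)) (f : 'Hom(V, K^o)) (W : {vspace V}).
Hypotheses (j1W : forall x, f (j1 x) = 0 -> j1 x \in W)
           (j2W : forall x, f (j2 x) = 0 -> j2 x \in W).

Lemma mem_lker_sum_l0 x1 x2 : (forall y, f (j1 y) = 0) ->
  f (j1 x1 + j2 x2) = 0 -> j1 x1 + j2 x2 \in W.
Proof.
by move=> f1_0; rewrite linearD /= f1_0 add0r => f2x0; rewrite memvD ?j1W ?j2W.
Qed.

Lemma mem_lker_sum_r0 x1 x2 : (forall y, f (j2 y) = 0) ->
  f (j1 x1 + j2 x2) = 0 -> j1 x1 + j2 x2 \in W.
Proof.
by move=> f2_0; rewrite linearD /= f2_0 addr0 => f1x0; rewrite memvD ?j1W ?j2W.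
Qed.

Lemma mem_lker_sum_common x1 x2 y1 y2 :
  f (j1 y1) = f (j2 y2) -> f (j1 y1) != 0 -> j1 y1 - j2 y2 \in W ->
  f (j1 x1 + j2 x2) = 0 -> j1 x1 + j2 x2 \in W.
Proof.
move=> f12 a_neq0 yW; rewrite linearD /= => fx0.
set c := f (j1 x1) / f (j1 y1).
have -> : j1 x1 + j2 x2 = j1 (x1 - c *: y1) + j2 (x2 + c *: y2) + c *: (j1 y1 - j2 y2).
  rewrite linearB linearD !linearZ /= scalerBr addrACA -addrA.
  by rewrite addrK scalerN addrA subrK.
have cy1 : c *: f (j1 y1) = f (j1 x1) by exact: divfK.
rewrite !memvD ?memvZ // ?j1W ?j2W //.
  by rewrite !linearB !linearZ /= scalerN cy1 subrr.
by rewrite !linearD !linearZ /= -f12 cy1 addrC.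
Qed.

End KernelOfSum.

Section FfunBlocks.
Variables (T : zmodType) (k1 k2 : nat).

Definition ffun_inl (x : {ffun 'I_k1 -> T}) : {ffun 'I_(k1 + k2) -> T} :=
  [ffun i => match split i with inl j => x j | inr _ => 0 end].
Definition ffun_inr (x : {ffun 'I_k2 -> T}) : {ffun 'I_(k1 + k2) -> T} :=
  [ffun i => match split i with inl _ => 0 | inr j => x j end].
Definition ffun_fst (x : {ffun 'I_(k1 + k2) -> T}) : {ffun 'I_k1 -> T} :=
  [ffun j => x (lshift k2 j)].
Definition ffun_snd (x : {ffun 'I_(k1 + k2) -> T}) : {ffun 'I_k2 -> T} :=
  [ffun j => x (rshift k1 j)].

Lemma ffun_fst_inl x : ffun_fst (ffun_inl x) = x.
Proof. by apply/ffunP => j; rewrite !ffunE (unsplitK (inl _ j)). Qed.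

Lemma ffun_fst_inr x : ffun_fst (ffun_inr x) = 0.
Proof. by apply/ffunP => j; rewrite !ffunE (unsplitK (inl _ j)). Qed.

Lemma ffun_snd_inr x : ffun_snd (ffun_inr x) = x.
Proof. by apply/ffunP => j; rewrite !ffunE (unsplitK (inr _ j)). Qed.

Lemma ffun_fst_sndK x : ffun_inl (ffun_fst x) + ffun_inr (ffun_snd x) = x.
Proof.
apply/ffunP => i; rewrite !ffunE.
by case: splitP => j ij; rewrite ffunE ?addr0 ?add0r; congr (x _); apply: val_inj.
Qed.

End FfunBlocks.
Arguments ffun_inl {T k1 k2} x.
Arguments ffun_inr {T k1 k2} x.
Arguments ffun_fst {T k1 k2} x.
Arguments ffun_snd {T k1 k2} x.

Section FfunBlocksLinear.
Variables (R : pzRingType) (M : lmodType R) (k1 k2 : nat).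

Lemma ffun_inl_is_linear : linear (@ffun_inl M k1 k2).
Proof.
move=> a u v; apply/ffunP => i; rewrite !ffunE.
by case: split => j; rewrite ?ffunE // scaler0 addr0.
Qed.

Lemma ffun_inr_is_linear : linear (@ffun_inr M k1 k2).
Proof.
move=> a u v; apply/ffunP => i; rewrite !ffunE.
by case: split => j; rewrite ?ffunE // scaler0 addr0.
Qed.

HB.instance Definition _ :=
  GRing.isLinear.Build R _ _ _ (@ffun_inl M k1 k2) ffun_inl_is_linear.
HB.instance Definition _ :=
  GRing.isLinear.Build R _ _ _ (@ffun_inr M k1 k2) ffun_inr_is_linear.

End FfunBlocksLinear.

Section Systems.
Variables (F : finFieldType) (L : fieldExtType F).

Lemma dimVL k : \dim {:VL L k} = k.
Proof. by rewrite dimvf /dim /= card_ord muln1. Qed.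

Lemma toLB k (u v : VF L k) : toL (u - v) = toL u - toL v.
Proof. by apply/ffunP => i; rewrite !ffunE. Qed.

Lemma lker_Lhyperplane k (g : 'Hom(VL L k, L^o)) :
  lker g != fullv -> Lhyperplane (lker g).
Proof. by move=> g_neq0; apply: etrans (lker_hyperplane g_neq0) (dimVL k). Qed.

Lemma Lspan_img_sub k k' (P : VF L k' -> Prop) (S : {vspace VL L k'})
    (j : 'Hom(VL L k', VL L k)) (W : {vspace VL L k}) :
  is_Lspan P S -> (forall v, P v -> j (toL v) \in W) -> forall x, x \in S -> j x \in W.
Proof.
move=> [_ spanS] PW x /(subvP (spanS (j @^-1: W)%VS _)).
by rewrite -memv_preim; apply=> v /PW; rewrite memv_preim.
Qed.

Section Restriction.
Variables (k : nat) (g : 'Hom(VL L k, L^o)).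

Definition Frestr (v : VF L k) : L := g (toL v).

Lemma Frestr_is_linear : linear Frestr.
Proof.
move=> a u v; rewrite /Frestr.
have -> : toL (a *: u + v) = (a%:A : L) *: toL u + toL v.
  by apply/ffunP => i; rewrite !ffunE /= -(mulr_algl a (u i)).
have gP (c : L) (x y : VL L k) : g (c *: x + y) = c * g x + g y by exact: linearP.
by rewrite gP mulr_algl.
Qed.

HB.instance Definition _ := GRing.isLinear.Build F _ _ _ Frestr Frestr_is_linear.

End Restriction.

Lemma cutting_Lspan_lker k (U : {vspace VF L k}) (g : 'Hom(VL L k, L^o)) :
  is_Lspan (fun v => v \in U) fullv -> cutting U ->
  is_Lspan (fun v => v \in U /\ toL v \in lker g) (lker g).
Proof.
move=> spanU cutU; have [g0|g_neq0] := eqVneq (lker g) fullv; last first.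
  exact/cutU/lker_Lhyperplane.
rewrite g0; split=> [v [] //|W UW]; apply: spanU.2 => v vU.
by apply: UW; rewrite memvf.
Qed.

Lemma evasive_img_dim (k n t : nat) (U : {vspace VF L k}) (g : 'Hom(VL L k, L^o)) :
  \dim U = n ->
  (forall h, h.+1 = k -> evasive U h (n%:Z - (\dim {:L})%:Z - 1 + t%:Z)) ->
  lker g != fullv -> ((\dim {:L}).+1 <= \dim (linfun (Frestr g) @: U) + t)%N.
Proof.
move=> dimU evU g_neq0.
have hypg := lker_Lhyperplane g_neq0.
have := limg_ker_dim (linfun (Frestr g)) U; rewrite dimU.
have := evU _ hypg (lker g) erefl (U :&: lker (linfun (Frestr g)))%VS (capvSl _ _).
suff ker_sub v : v \in (U :&: lker (linfun (Frestr g)))%VS -> toL v \in lker g.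
  (* [set] identifies two copies of this dimension that differ in implicit instances. *)
  by move/(_ ker_sub); set dK := \dim (U :&: _); lia.
by case/memv_capP => _; rewrite !memv_ker lfunE.
Qed.

Lemma cutting_embed_lker_sub k k' (U : {vspace VF L k}) (U' : {vspace VF L k'})
    (j : 'Hom(VF L k', VF L k)) (jL : 'Hom(VL L k', VL L k))
    (f : 'Hom(VL L k, L^o)) (W : {vspace VL L k}) :
  is_Lspan (fun v => v \in U') fullv -> cutting U' ->
  (forall v, toL (j v) = jL (toL v)) -> (forall v, v \in U' -> j v \in U) ->
  (forall v, v \in U /\ toL v \in lker f -> toL v \in W) ->
  forall x, f (jL x) = 0 -> jL x \in W.
Proof.
move=> spanU' cutU' toL_j jU UfW x fx0.
apply: (Lspan_img_sub (cutting_Lspan_lker (f \o jL)%VF spanU' cutU')).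
  move=> v [vU']; rewrite memv_ker comp_lfunE -toL_j => /eqP fv0.
  by apply: UfW; rewrite jU // memv_ker fv0.
by rewrite memv_ker comp_lfunE fx0.
Qed.

Section DirectSum.
Variables (k1 k2 : nat).

Definition inlF : 'Hom(VF L k1, VF L (k1 + k2)) := linfun (@ffun_inl L k1 k2).
Definition inrF : 'Hom(VF L k2, VF L (k1 + k2)) := linfun (@ffun_inr L k1 k2).
Definition inlL : 'Hom(VL L k1, VL L (k1 + k2)) := linfun (@ffun_inl L^o k1 k2).
Definition inrL : 'Hom(VL L k2, VL L (k1 + k2)) := linfun (@ffun_inr L^o k1 k2).

Lemma dsumE (U1 : {vspace VF L k1}) (U2 : {vspace VF L k2}) :
  dsum U1 U2 = (inlF @: U1 + inrF @: U2)%VS.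
Proof. by []. Qed.

Lemma toL_inl v : toL (inlF v) = inlL (toL v).
Proof. by apply/ffunP => i; rewrite !lfunE !ffunE; case: split => // j; rewrite ffunE. Qed.

Lemma toL_inr v : toL (inrF v) = inrL (toL v).
Proof. by apply/ffunP => i; rewrite !lfunE !ffunE; case: split => // j; rewrite ffunE. Qed.

Lemma inlL_inrL_split x : inlL (ffun_fst x) + inrL (ffun_snd x) = x.
Proof. by rewrite !lfunE ffun_fst_sndK. Qed.

Lemma dim_dsum (U1 : {vspace VF L k1}) (U2 : {vspace VF L k2}) :
  \dim (dsum U1 U2) = (\dim U1 + \dim U2)%N.
Proof.
have /eqP lker_inl : lker inlF == 0%VS.
  by apply/lker0P => u v /(congr1 ffun_fst); rewrite !lfunE !ffun_fst_inl.
have /eqP lker_inr : lker inrF == 0%VS.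
  by apply/lker0P => u v /(congr1 ffun_snd); rewrite !lfunE !ffun_snd_inr.
rewrite dsumE dimv_disjoint_sum ?limg_dim_eq ?lker_inl ?lker_inr ?capv0 //.
apply/eqP; rewrite -subv0; apply/subvP => _ /memv_capP [/memv_imgP [u1 _ ->]].
case/memv_imgP => u2 _ /(congr1 ffun_fst); rewrite !lfunE ffun_fst_inl ffun_fst_inr => ->.
by rewrite linear0 memv0.
Qed.

Lemma inlF_dsum (U1 : {vspace VF L k1}) (U2 : {vspace VF L k2}) v :
  v \in U1 -> inlF v \in dsum U1 U2.
Proof. by move=> vU1; rewrite dsumE (subvP (addvSl _ _)) ?memv_img. Qed.

Lemma inrF_dsum (U1 : {vspace VF L k1}) (U2 : {vspace VF L k2}) v :
  v \in U2 -> inrF v \in dsum U1 U2.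
Proof. by move=> vU2; rewrite dsumE (subvP (addvSr _ _)) ?memv_img. Qed.

Lemma dsum_Lspan (U1 : {vspace VF L k1}) (U2 : {vspace VF L k2}) :
  is_Lspan (fun v => v \in U1) fullv -> is_Lspan (fun v => v \in U2) fullv ->
  is_Lspan (fun v => v \in dsum U1 U2) fullv.
Proof.
move=> span1 span2; split=> [v _|W dsumW]; first exact: memvf.
apply/subvP => x _; rewrite -(inlL_inrL_split x) memvD //.
  by apply: (Lspan_img_sub span1 _ (memvf _)) => v vU1; rewrite -toL_inl dsumW ?inlF_dsum.
by apply: (Lspan_img_sub span2 _ (memvf _)) => v vU2; rewrite -toL_inr dsumW ?inrF_dsum.
Qed.

Section Cutting.
Variables (n1 n2 t1 t2 : nat) (U1 : {vspace VF L k1}) (U2 : {vspace VF L k2}).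
Hypotheses (dimU1 : \dim U1 = n1) (dimU2 : \dim U2 = n2).
Hypotheses (span1 : is_Lspan (fun v => v \in U1) fullv)
           (span2 : is_Lspan (fun v => v \in U2) fullv).
Hypotheses (cut1 : cutting U1) (cut2 : cutting U2).
Hypotheses (ev1 : forall h, h.+1 = k1 -> evasive U1 h (n1%:Z - (\dim {:L})%:Z - 1 + t1%:Z))
           (ev2 : forall h, h.+1 = k2 -> evasive U2 h (n2%:Z - (\dim {:L})%:Z - 1 + t2%:Z)).
Hypothesis t12 : (t1 + t2 < \dim {:L} + 2)%N.

Lemma evasive_common_value (g1 : 'Hom(VL L k1, L^o)) (g2 : 'Hom(VL L k2, L^o)) :
  lker g1 != fullv -> lker g2 != fullv ->
  exists u1 u2, [/\ u1 \in U1, u2 \in U2, g1 (toL u1) = g2 (toL u2) & g1 (toL u1) != 0].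
Proof.
move=> g1_neq0 g2_neq0.
have := evasive_img_dim dimU1 ev1 g1_neq0; have := evasive_img_dim dimU2 ev2 g2_neq0.
set I1 := (_ @: U1)%VS; set I2 := (_ @: U2)%VS => dimI2 dimI1.
have /capv_neq0 : (\dim {:L} < \dim I1 + \dim I2)%N by lia.
rewrite -vpick0; move: (memv_pick (I1 :&: I2)%VS); set a := vpick _.
case/memv_capP=> /memv_imgP [u1 u1U1 a1] /memv_imgP [u2 u2U2 a2] a_neq0.
have {}a1 : a = g1 (toL u1) by rewrite a1 lfunE.
have {}a2 : a = g2 (toL u2) by rewrite a2 lfunE.
by exists u1, u2; rewrite -a1 -a2.
Qed.

Lemma dsum_cutting : cutting (dsum U1 U2).
Proof.
move=> H hypH; split=> [v [] //|W dsumHW].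
have [f kerf] := hyperplane_lker (etrans hypH (esym (dimVL _))).
rewrite -kerf in dsumHW *.
set g1 := (f \o inlL)%VF; set g2 := (f \o inrL)%VF.
have g1E x : g1 x = f (inlL x) by rewrite comp_lfunE.
have g2E x : g2 x = f (inrL x) by rewrite comp_lfunE.
have side1 := cutting_embed_lker_sub span1 cut1 toL_inl (@inlF_dsum U1 U2) dsumHW.
have side2 := cutting_embed_lker_sub span2 cut2 toL_inr (@inrF_dsum U1 U2) dsumHW.
apply/subvP => x; rewrite -(inlL_inrL_split x) memv_ker => /eqP fx0.
have [g1_0|g1_neq0] := eqVneq (lker g1) fullv.
  apply: (mem_lker_sum_l0 side1 side2 _ fx0) => y.
  by apply/eqP; rewrite -g1E -memv_ker g1_0 memvf.
have [g2_0|g2_neq0] := eqVneq (lker g2) fullv.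
  apply: (mem_lker_sum_r0 side1 side2 _ fx0) => y.
  by apply/eqP; rewrite -g2E -memv_ker g2_0 memvf.
have [u1 [u2 [u1U1 u2U2 g12 a_neq0]]] := evasive_common_value g1_neq0 g2_neq0.
rewrite !g1E !g2E in g12 a_neq0.
apply: (mem_lker_sum_common side1 side2 g12 a_neq0 _ fx0).
rewrite -toL_inl -toL_inr -toLB dsumHW //.
split; first by rewrite memvB ?inlF_dsum ?inrF_dsum.
by rewrite toLB toL_inl toL_inr memv_ker linearB /= g12 subrr.
Qed.

End Cutting.
End DirectSum.
End Systems.

Theorem proposition3p8 (F : finFieldType) (L : fieldExtType F)
  (k1 k2 n1 n2 t1 t2 : nat)
  (U1 : {vspace VF L k1}) (U2 : {vspace VF L k2}) :
  is_system n1 U1 -> cutting U1 ->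
  (forall h : nat, h.+1 = k1 ->
     evasive U1 h (n1%:Z - (\dim {:L})%:Z - 1 + t1%:Z)) ->
  is_system n2 U2 -> cutting U2 ->
  (forall h : nat, h.+1 = k2 ->
     evasive U2 h (n2%:Z - (\dim {:L})%:Z - 1 + t2%:Z)) ->
  (t1 + t2 < \dim {:L} + 2)%N ->
  is_system (n1 + n2)%N (dsum U1 U2) /\ cutting (dsum U1 U2).
Proof.
move=> [dimU1 span1] cut1 ev1 [dimU2 span2] cut2 ev2 t12.
split; last exact: dsum_cutting dimU1 dimU2 span1 span2 cut1 cut2 ev1 ev2 t12.
by split; [rewrite dim_dsum dimU1 dimU2 | exact: dsum_Lspan].
Qed.
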